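(* Let $G=(V,E)$ be a finite connected graph and $\mathbf{p}\in\mathbb{R}^V$ with $\sum_{v\in V}\mathbf{p}_v=0$. Let $\mathcal{G}=(\mathcal V,\mathcal E)$ be a connected component of the graph $\mathfrak G$, with $\mathcal V=\mathcal V_1\sqcup\mathcal V_2$, $\mathcal V_i=\mathcal V\cap\mathfrak V_i$, and suppose $\mathcal G$ contains no special vertex. Then $$\sum_{\mathfrak u\in\mathcal V_1}q(\mathfrak u)=\sum_{\mathfrak w\in\mathcal V_2}q(\mathfrak w).$$
   Context: Spanning trees and spanning 2-forests (acyclic spanning subgraphs with exactly two connected components) of $G$ form sets $\mathcal{ST}$, $\mathcal{SF}_2$; $F+e$ (resp. $T-e$) denotes the spanning subgraph obtained by adding (resp. removing) the edge $e$. For $F\in\mathcal{SF}_2$, $\mathcal{P}(F)=\{X,X'\}$ is the partition of $V$ into the vertex sets of its two components, $F\sim_v F'$ iff $\mathcal{P}(F)=\mathcal{P}(F')$, and $q(F)=(\sum_{v\in X}\mathbf{p}_v)^2$ (independent of the choice of part since $\mathbf{p}$ sums to zero). The graph $\mathfrak G$ is bipartite with vertex set $\mathfrak V_1\sqcup\mathfrak V_2$, $\mathfrak V_1=\{(F_1,F_2,T):F_1,F_2\in\mathcal{SF}_2,T\in\mathcal{ST}\}$, $\mathfrak V_2=\{(T_1,T_2,F):T_1,T_2\in\mathcal{ST},F\in\mathcal{SF}_2\}$; $(F_1,F_2,T)$ is adjacent to $(T_1,T_2,F)$ iff there is an edge $e$ with $T=F+e$, $F_1=T_1-e$, $F_2=T_2-e$.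 A vertex $(F_1,F_2,T)\in\mathfrak V_1$ is special if $F_1\not\sim_v F_2$; a vertex $(T_1,T_2,F)\in\mathfrak V_2$ is special if there is an edge $e\in(E(T_1)\setminus E(T_2))\cup(E(T_2)\setminus E(T_1))$ with $F+e$ a spanning tree. For non-special vertices, $q(F_1,F_2,T)=q(F_1)$ $(=q(F_2))$ and $q(T_1,T_2,F)=q(F)$. *)

From HB Require Import structures.
From mathcomp Require Import all_boot all_order all_algebra.
From Stdlib Require Import Relation_Operators.
Set Implicit Arguments. Unset Strict Implicit. Unset Printing Implicit Defensive.
Import Order.TTheory GRing.Theory Num.Theory.

(* A finite simple graph G = (V, E): V a finType, E a set of 2-element
   subsets of V.  A spanning subgraph is given by its edge set F : {set {set V}}. *)

Definition simple_graph (V : finType) (E : {set {set V}}) : Prop :=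
  forall e, e \in E -> #|e| = 2%N.

Definition adj (V : finType) (F : {set {set V}}) : rel V :=
  fun x y => [set x; y] \in F.

Definition comps (V : finType) (F : {set {set V}}) : {set {set V}} :=
  [set [set y | connect (adj F) x y] | x : V].

Definition graph_connected (V : finType) (E : {set {set V}}) : Prop :=
  #|comps E| = 1%N.

Definition acyclic (V : finType) (F : {set {set V}}) : Prop :=
  forall c : seq V, (2 < size c)%N -> ~~ (cycle (adj F) c && uniq c).

Definition spanning_tree (V : finType) (E F : {set {set V}}) : Prop :=
  [/\ F \subset E, acyclic F & #|comps F| = 1%N].

Definition spanning_2forest (V : finType) (E F : {set {set V}}) : Prop :=
  [/\ F \subset E, acyclic F & #|comps F| = 2%N].

Definition vequiv (V : finType) (F F' : {set {set V}}) : Prop := comps F = comps F'.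

Definition qF (R : numDomainType) (V : finType) (p : V -> R) (F : {set {set V}}) : R :=
  if [pick X in comps F] is Some X then ((\sum_(v in X) p v) ^+ 2)%R else 0%R.

Definition edgeset_triple (V : finType) : finType :=
  ({set {set V}} * {set {set V}} * {set {set V}})%type.

(* vertices of the big graph: inl (F1,F2,T) in V1, inr (T1,T2,F) in V2 *)
Definition bigvert (V : finType) : finType :=
  (edgeset_triple V + edgeset_triple V)%type.

Definition valid_vert (V : finType) (E : {set {set V}}) (u : bigvert V) : Prop :=
  match u with
  | inl (F1, F2, T) => [/\ spanning_2forest E F1, spanning_2forest E F2 & spanning_tree E T]
  | inr (T1, T2, F) => [/\ spanning_tree E T1, spanning_tree E T2 & spanning_2forest E F]
  end.

Definition link (V : finType) (E : {set {set V}}) (x y : edgeset_triple V) : Prop :=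
  let: (F1, F2, T) := x in
  let: (T1, T2, F) := y in
  exists2 e, e \in E &
    [/\ T = F :|: [set e], F1 = T1 :\ e & F2 = T2 :\ e].

Definition bigadj (V : finType) (E : {set {set V}}) (u w : bigvert V) : Prop :=
  valid_vert E u /\ valid_vert E w /\
  match u, w with
  | inl x, inr y => link E x y
  | inr y, inl x => link E x y
  | _, _ => False
  end.

Definition big_component (V : finType) (E : {set {set V}}) (C : {set bigvert V}) : Prop :=
  exists u0, valid_vert E u0 /\
    forall w, w \in C <-> clos_refl_trans (bigvert V) (bigadj E) u0 w.

Definition special (V : finType) (E : {set {set V}}) (u : bigvert V) : Prop :=
  match u with
  | inl (F1, F2, T) => ~ vequiv F1 F2
  | inr (T1, T2, F) =>
      exists2 e, e \in (T1 :\: T2) :|: (T2 :\: T1) & spanning_tree E (F :|: [set e])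
  end.

(* Fix a spanning tree T and a spanning 2-forest G with parts X and ~: X.  For each
   edge e of T joining the two parts, let A_e be the side of T - e containing a chosen
   endpoint s e of e.  Signing the indicator of A_e by + or - according to whether s e
   lies in X, the signed indicators add up to the indicator of X plus a constant (check
   it across each tree edge), so pairing with p, whose total is 0, gives
     q(G) = sum_e p(comp_G (s e)) * p(A_e).
   Expanding q(F1) along T on the V1 side and q(F) along T1 on the V2 side turns both
   sums into sums over (vertex, edge) pairs, and (F1, F2, T; e) |-> (F1+e, F2+e, T-e; e)
   is a bijection between the two index sets inside the component which merely swaps
   the two factors.  Non-specialness is what makes F2 + e a tree on one side and forces
   e into T2 on the other. *)

From mathcomp Require Import all_boot all_order all_algebra ring.
From Stdlib Require Import Relation_Operators.
Set Implicit Arguments. Unset Strict Implicit. Unset Printing Implicit Defensive.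
Import GRing.Theory.

Section Components.
Variable V : finType.
Implicit Types (F G T : {set {set V}}) (X : {set V}) (a b x y : V).

Lemma adjC F : symmetric (adj F).
Proof. by move=> x y; rewrite /adj setUC. Qed.

Lemma connectC F : connect_sym (adj F).
Proof. exact/sym_connect_sym/adjC. Qed.

Definition comp F x := [set y | connect (adj F) x y].

Lemma mem_comp F x : x \in comp F x.
Proof. by rewrite inE connect0. Qed.

Lemma comp_in_comps F x : comp F x \in comps F.
Proof. exact: imset_f. Qed.

Lemma comp_eq F x y : connect (adj F) x y -> comp F x = comp F y.
Proof. by move=> cxy; apply/setP => z; rewrite !inE (same_connect (connectC F) cxy). Qed.

Lemma comps_comp F X x : X \in comps F -> x \in X -> X = comp F x.
Proof. by case/imsetP=> y _ -> xX; apply: comp_eq; rewrite inE in xX. Qed.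

Lemma comps_connect_eq F F' : comps F = comps F' ->
  connect (adj F) =2 connect (adj F').
Proof.
move=> eqFF' x y; have := comp_in_comps F x; rewrite eqFF' => /comps_comp/(_ (mem_comp F x)).
by move/setP/(_ y); rewrite !inE.
Qed.

Lemma connect_fun_eq (aT : eqType) F (f : V -> aT) :
  (forall x y, adj F x y -> f x = f y) -> forall x y, connect (adj F) x y -> f x = f y.
Proof.
move=> fF x y; pose P := [pred v | f v == f x].
have clP : closed (adj F) P by move=> u v /fF fuv; rewrite !inE fuv.
by move=> /(closed_connect clP); rewrite !inE eqxx => /esym/eqP.
Qed.

Definition crossing F (e : {set V}) :=
  [exists x in e, exists y in e, ~~ connect (adj F) x y].

Lemma crossing2 F a b : crossing F [set a; b] = ~~ connect (adj F) a b.
Proof.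
apply/existsP/idP => [[x /andP[+ /existsP[y /andP[+ +]]]]|nab].
  by rewrite !inE => /orP[]/eqP-> /orP[]/eqP->; rewrite ?connect0 // connectC.
by exists a; rewrite !inE eqxx /=; apply/existsP; exists b; rewrite !inE eqxx orbT.
Qed.

Lemma comps1_of_connect F a : (forall v, connect (adj F) a v) -> #|comps F| = 1%N.
Proof.
move=> ca; apply/eqP/cards1P; exists (comp F a); apply/setP => X; rewrite inE.
apply/idP/eqP => [/imsetP[v _ ->]|->]; last exact: comp_in_comps.
exact/esym/comp_eq.
Qed.

Lemma comps1_connect F : #|comps F| = 1%N -> forall x y, connect (adj F) x y.
Proof.
move/eqP/cards1P=> [X cF] x y.
have := comp_in_comps F x; have := comp_in_comps F y.
rewrite cF !inE => /eqP eyX /eqP exX.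
by have := mem_comp F y; rewrite eyX -exX inE.
Qed.

Lemma comps2_connect F X x y : #|comps F| = 2%N -> X \in comps F ->
  connect (adj F) x y = ((x \in X) == (y \in X)).
Proof.
move=> cF2 XF; have [xX|xNX] := boolP (x \in X).
  by rewrite (comps_comp XF xX) inE.
have XNx : X != comp F x by apply: contraNneq xNX => ->; exact: mem_comp.
have cF : comps F = [set X; comp F x].
  apply/esym/eqP; rewrite eqEcard cards2 XNx cF2 subUset !sub1set XF.
  by rewrite comp_in_comps.
have [yX|yNX] := boolP (y \in X).
  by apply/negbTE; apply: contra XNx => /comp_eq ->; rewrite -(comps_comp XF yX).
have := comp_in_comps F y; rewrite cF !inE => /orP[/eqP yX|/eqP yx].
  by rewrite -yX mem_comp in yNX.
by have := mem_comp F y; rewrite yx inE.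
Qed.

Lemma comps2_connect_or F a b : #|comps F| = 2%N -> ~~ connect (adj F) a b ->
  forall v, connect (adj F) a v || connect (adj F) b v.
Proof.
move=> cF2 nab v; rewrite !(comps2_connect _ _ cF2 (comp_in_comps F a)).
by rewrite !inE connect0 (negPf nab); case: connect.
Qed.

Lemma comps2_of_connect F a b : ~~ connect (adj F) a b ->
  (forall v, connect (adj F) a v || connect (adj F) b v) -> #|comps F| = 2%N.
Proof.
move=> nab cab; have -> : comps F = [set comp F a; comp F b].
  apply/setP => X; rewrite !inE; apply/imsetP/orP => [[v _ ->]|].
    by case/orP: (cab v) => /comp_eq ->; rewrite eqxx ?orbT; [left|right].
  by case=> /eqP ->; eexists.
rewrite cards2; suff -> : comp F a != comp F b by [].
by apply: contraNneq nab => eab; have := mem_comp F b; rewrite -eab inE.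
Qed.

Lemma comp_comps2 F X a : #|comps F| = 2%N -> X \in comps F ->
  comp F a = if a \in X then X else ~: X.
Proof.
move=> cF2 XF; apply/setP => v; rewrite inE (comps2_connect _ _ cF2 XF).
by case: (a \in X); rewrite ?inE; case: (v \in X).
Qed.

End Components.

Section EdgeSurgery.
Variable V : finType.
Implicit Types (F G T : {set {set V}}) (a b x y : V).

Lemma disconnected_edge_notin F a b : ~~ connect (adj F) a b -> [set a; b] \notin F.
Proof. by apply: contra => abF; apply: connect1. Qed.

Lemma connect_subset F F' : F \subset F' ->
  subrel (connect (adj F)) (connect (adj F')).
Proof. by move=> sFF'; apply: connect_sub => x y Fxy; apply/connect1/(subsetP sFF'). Qed.

Lemma acyclic_subset F F' : F \subset F' -> acyclic F' -> acyclic F.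
Proof.
move=> sFF' acF' c c_gt2; apply: contra (acF' c c_gt2) => /andP[cyc ->].
by rewrite andbT; apply: sub_cycle cyc => x y; apply: (subsetP sFF').
Qed.

Lemma comps1_addedge G a b : #|comps G| = 2%N -> ~~ connect (adj G) a b ->
  #|comps (G :|: [set [set a; b]])| = 1%N.
Proof.
move=> cG2 nab; apply: (comps1_of_connect (a := a)) => v.
have sG := subsetUl G [set [set a; b]].
case/orP: (comps2_connect_or cG2 nab v) => /(connect_subset sG) // bv.
by apply: connect_trans bv; apply: connect1; rewrite /adj !inE eqxx orbT.
Qed.

Lemma acyclic_deledge_disconnect T a b : acyclic T -> [set a; b] \in T -> a != b ->
  ~~ connect (adj (T :\ [set a; b])) a b.
Proof.
move=> acT abT ab; apply/negP => /connectP[p /shortenP[q qab uq _] lq].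
have q_gt1 : (1 < size q)%N.
  case: q qab lq {uq} => [|y [|z q]] //= => [_ ba|/andP[+ _] ya].
    by rewrite ba eqxx in ab.
  by rewrite ya /adj !inE eqxx.
have /negP[] := acT (a :: q) q_gt1; rewrite uq andbT /= rcons_path -lq.
rewrite (sub_path _ qab) /=; first by rewrite /adj setUC.
by move=> x y; rewrite /adj inE => /andP[].
Qed.

Lemma connect_deledge F a b v : connect (adj F) a v ->
  connect (adj (F :\ [set a; b])) a v || connect (adj (F :\ [set a; b])) b v.
Proof.
set F' := F :\ _; pose P := [pred v | connect (adj F') a v || connect (adj F') b v].
suff clP : closed (adj F) P by move=> /(closed_connect clP); rewrite !inE connect0 => <-.
move=> x y Fxy; have [exy|nexy] := eqVneq [set x; y] [set a; b].
  have /[!inE] : x \in [set a; b] by rewrite -exy !inE eqxx.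
  have /[!inE] : y \in [set a; b] by rewrite -exy !inE eqxx orbT.
  by do 2!case/orP=> /eqP->; rewrite !connect0 ?orbT.
have F'xy : connect (adj F') x y by apply: connect1; rewrite /adj !inE nexy.
by rewrite !inE !(same_connect_r (connectC F') F'xy).
Qed.

Lemma comps2_deledge T a b : #|comps T| = 1%N -> acyclic T -> [set a; b] \in T ->
  a != b -> #|comps (T :\ [set a; b])| = 2%N.
Proof.
move=> cT1 acT abT ab; apply: comps2_of_connect (acyclic_deledge_disconnect acT abT ab) _.
by move=> v; apply/connect_deledge/comps1_connect.
Qed.

Lemma comp_deledge T e x y z : adj T x y -> e != [set x; y] ->
  (x \in comp (T :\ e) z) = (y \in comp (T :\ e) z).
Proof.
move=> Txy exy; have T'xy : connect (adj (T :\ e)) x y.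
  by apply: connect1; rewrite /adj !inE eq_sym exy.
by rewrite !inE (same_connect_r (connectC _) T'xy).
Qed.

Lemma adj_addedgeN G a b u v : v \notin [set a; b] ->
  adj (G :|: [set [set a; b]]) u v = adj G u v.
Proof.
move=> vNab; rewrite /adj in_setU in_set1; case: eqP => [uvab|_]; last by rewrite orbF.
by rewrite -uvab !inE eqxx orbT in vNab.
Qed.

Lemma path_addedgeN G a b x s y : s != [::] -> a \notin s -> b \notin s ->
  path (adj (G :|: [set [set a; b]])) x (rcons s y) = path (adj G) x (rcons s y).
Proof.
elim: s x => [//|v s IHs] x _; rewrite !in_cons !negb_or => /andP[av aNs] /andP[bv bNs].
have vNab : v \notin [set a; b] by rewrite !inE !(eq_sym v) negb_or av bv.
rewrite /= adj_addedgeN //; congr (_ && _); case: s IHs aNs bNs => [|w s] IHs aNs bNs.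
  by rewrite /= adjC adj_addedgeN // adjC.
exact: IHs.
Qed.

Lemma acyclic_addedge G a b : acyclic G -> ~~ connect (adj G) a b ->
  acyclic (G :|: [set [set a; b]]).
Proof.
move=> acG nab c c_gt2; apply/negP => /andP[cyc uc].
have ab : a != b by apply: contraNneq nab => ->; apply: connect0.
have [/andP[ac bc]|abNc] := boolP ((a \in c) && (b \in c)); last first.
  have /negP[] := acG c c_gt2; rewrite uc andbT.
  apply: (sub_in_cycle _ (allss c) cyc) => u v u_c v_c; rewrite /adj in_setU in_set1.
  case/orP=> [//|/eqP uvab]; case/negP: abNc.
  have ab_c w : w \in [set a; b] -> w \in c by rewrite -uvab !inE => /orP[]/eqP->.
  by rewrite !ab_c // !inE eqxx ?orbT.
case: (rot_to_arc uc ac bc ab) => i p1 p2 _ _ ci.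
move: cyc; rewrite -(rot_cycle i) ci /= rcons_cat /= -cat_rcons cat_path last_rcons.
case/andP=> ab_p1 ba_p2; move: uc; rewrite -(rot_uniq i) ci /= mem_cat cat_uniq /=.
rewrite !inE !negb_or => /and5P[/and3P[aNp1 _ aNp2] _ /andP[bNp1 _] bNp2 _].
have [p1_0|p1N0] := eqVneq p1 [::].
  have p2N0 : p2 != [::].
    by apply: contraTneq c_gt2 => p2_0; rewrite -(size_rot i) ci p1_0 p2_0.
  move: ba_p2; rewrite path_addedgeN // => ba_p2; case/negP: nab; rewrite connectC.
  by apply/connectP; exists (rcons p2 a); rewrite ?last_rcons.
move: ab_p1; rewrite path_addedgeN // => ab_p1; case/negP: nab.
by apply/connectP; exists (rcons p1 b); rewrite ?last_rcons.
Qed.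

End EdgeSurgery.

Section SpanningSurgery.
Variables (V : finType) (E : {set {set V}}).
Implicit Types (F T : {set {set V}}) (a b : V).

Lemma spanning_tree_addedge F a b : spanning_2forest E F -> [set a; b] \in E ->
  ~~ connect (adj F) a b -> spanning_tree E (F :|: [set [set a; b]]).
Proof.
case=> sFE acF cF2 abE nab; split; first by rewrite subUset sFE sub1set.
  exact: acyclic_addedge.
exact: comps1_addedge.
Qed.

Lemma spanning_2forest_deledge T a b : spanning_tree E T -> [set a; b] \in T ->
  a != b -> spanning_2forest E (T :\ [set a; b]).
Proof.
case=> sTE acT cT1 abT ab; split; first exact: subset_trans (subD1set T _) sTE.
  exact: acyclic_subset (subD1set T _) acT.
exact: comps2_deledge.
Qed.

End SpanningSurgery.

Section CutWeights.
Local Open Scope ring_scope.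
Variables (V : finType) (R : numDomainType) (p : V -> R).
Hypothesis p_sum0 : \sum_v p v = 0.
Implicit Types (F G T : {set {set V}}) (X : {set V}).

Definition weight X := \sum_(v in X) p v.

Lemma weight_indicator X : weight X = \sum_v p v * (v \in X)%:R.
Proof. by rewrite /weight big_mkcond; apply: eq_bigr => v _; case: (v \in X); rewrite ?mulr1 ?mulr0. Qed.

Lemma weightC X : weight (~: X) = - weight X.
Proof.
have /eqP := p_sum0; rewrite (bigID (mem X)) /= addr_eq0 => /eqP.
by rewrite /weight => ->; rewrite opprK; apply: eq_bigl => v; rewrite inE.
Qed.

Lemma weight_comps2 G X a : #|comps G| = 2%N -> X \in comps G ->
  weight (comp G a) = (-1) ^+ (a \notin X) * weight X.
Proof.
by move=> cG2 XG; rewrite (comp_comps2 a cG2 XG); case: (a \in X); rewrite ?weightC ?mul1r ?mulN1r.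
Qed.

Lemma sum_mul_const (f : V -> R) : (forall x y, f x = f y) -> \sum_v p v * f v = 0.
Proof.
move=> fc; case: (pickP (fun _ : V => true)) => [d _|V0]; last by rewrite big1 // => v; rewrite V0.
by rewrite (eq_bigr (fun v => p v * f d)) => [|v _]; rewrite ?(fc v d) // -mulr_suml p_sum0 mul0r.
Qed.

Section TreeCuts.
Variables (T G : {set {set V}}) (X : {set V}) (s : {set V} -> V).
Hypotheses (T_edge2 : forall e, e \in T -> #|e| = 2%N) (acT : acyclic T)
  (cT1 : #|comps T| = 1%N) (cG2 : #|comps G| = 2%N) (XG : X \in comps G)
  (s_edge : forall e, e \in T -> s e \in e).

Definition cut_potential v : R :=
  \sum_(e in T | crossing G e) (-1) ^+ (s e \notin X) * (v \in comp (T :\ e) (s e))%:R.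

Lemma cut_potential_step x y : adj T x y ->
  cut_potential x - cut_potential y = (x \in X)%:R - (y \in X)%:R.
Proof.
move=> Txy; have xy : x != y by have := T_edge2 Txy; rewrite cards2; case: (x != y).
rewrite /cut_potential -sumrB; under eq_bigr do rewrite -mulrBr.
have [crxy|ncrxy] := boolP (crossing G [set x; y]); last first.
  rewrite big1 => [|e /andP[_ cre]]; last first.
    by rewrite (comp_deledge _ Txy) ?subrr ?mulr0 //; apply: contraNneq ncrxy => <-.
  by move: ncrxy; rewrite crossing2 negbK (comps2_connect _ _ cG2 XG) => /eqP->; rewrite subrr.
rewrite (bigD1 [set x; y]) /=; last by rewrite crxy andbT.
rewrite big1 ?addr0 => [|e /andP[_ exy]]; last first.
  by rewrite (comp_deledge _ Txy exy) subrr mulr0.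
move: crxy; rewrite crossing2 (comps2_connect _ _ cG2 XG).
have xyT' := acyclic_deledge_disconnect acT Txy xy.
have := s_edge Txy; rewrite !inE => /orP[]/eqP->;
  rewrite connect0 ?(connectC _ y) (negPf xyT');
  by case: (x \in X); case: (y \in X) => //= _;
     rewrite ?(expr0, expr1, mul1r, mulN1r, subr0, sub0r, opprK).
Qed.

Lemma sum_signed_cut_weights :
  \sum_(e in T | crossing G e) (-1) ^+ (s e \notin X) * weight (comp (T :\ e) (s e)) =
  weight X.
Proof.
transitivity (\sum_v p v * cut_potential v).
  under [RHS]eq_bigr do rewrite big_distrr; rewrite exchange_big /=.
  apply: eq_bigr => e _; rewrite weight_indicator big_distrr /=.
  by apply: eq_bigr => v _; rewrite mulrCA.
apply/eqP; rewrite weight_indicator -subr_eq0 -sumrB; apply/eqP.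
under eq_bigr do rewrite -mulrBr; apply: sum_mul_const => x y.
apply: (connect_fun_eq (f := fun v => cut_potential v - (v \in X)%:R)) => [{}x {}y|].
  by move/cut_potential_step/eqP; rewrite subr_eq => /eqP ->; ring.
exact: comps1_connect.
Qed.

End TreeCuts.

Lemma sum_cut_products T G (s : {set V} -> V) :
  (forall e, e \in T -> #|e| = 2%N) -> acyclic T -> #|comps T| = 1%N ->
  #|comps G| = 2%N -> (forall e, e \in T -> s e \in e) ->
  \sum_(e in T | crossing G e) weight (comp G (s e)) * weight (comp (T :\ e) (s e)) =
  qF p G.
Proof.
move=> T_edge2 acT cT1 cG2 s_edge; rewrite /qF; case: pickP => [X XG|noX]; last first.
  by have := eq_card0 noX; rewrite cG2.
under eq_bigr do rewrite (weight_comps2 _ cG2 XG) mulrAC mulrC.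
by rewrite -big_distrr sum_signed_cut_weights // expr2.
Qed.

End CutWeights.

Lemma qF_tree_cuts (R : numDomainType) (V : finType) (E : {set {set V}}) (p : V -> R)
    (s : {set V} -> V) (G T : {set {set V}}) :
  (\sum_v p v = 0)%R -> simple_graph E -> (forall e, e \in E -> s e \in e) ->
  spanning_2forest E G -> spanning_tree E T ->
  qF p G = (\sum_(e in T | crossing G e)
              weight p (comp G (s e)) * weight p (comp (T :\ e) (s e)))%R.
Proof.
move=> p_sum0 simE s_edge [_ _ cG2] [sT acT cT1].
by rewrite sum_cut_products // => e /(subsetP sT) eE; [apply: simE | apply: s_edge].
Qed.

Lemma eq_big_bij (R : Type) (idx : R) (op : Monoid.com_law idx) (I J : finType)
    (P : pred I) (Q : pred J) (h : J -> I) (h' : I -> J) (F : I -> R) (G : J -> R) :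
  (forall i, P i -> Q (h' i) /\ h (h' i) = i) ->
  (forall j, Q j -> P (h j) /\ h' (h j) = j) ->
  (forall j, Q j -> F (h j) = G j) ->
  \big[op/idx]_(i | P i) F i = \big[op/idx]_(j | Q j) G j.
Proof.
move=> PQ QP FG; rewrite (reindex_onto h h' (fun i Pi => (PQ i Pi).2)).
apply: eq_big => [j|j /andP[/PQ[Qhj _] /eqP hj]]; last by apply: FG; rewrite -hj.
by apply/andP/idP => [[/PQ[Qhj _] /eqP <-] //|/QP[-> ->]].
Qed.

Definition raise (V : finType) (e : {set V}) (x : edgeset_triple V) : edgeset_triple V :=
  (x.1.1 :|: [set e], x.1.2 :|: [set e], x.2 :\ e).

Definition lower (V : finType) (e : {set V}) (y : edgeset_triple V) : edgeset_triple V :=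
  (y.1.1 :\ e, y.1.2 :\ e, y.2 :|: [set e]).

Section BigComponent.
Variables (V : finType) (E : {set {set V}}) (C : {set bigvert V}).
Hypotheses (simE : simple_graph E) (compC : big_component E C).
Implicit Types (F T : {set {set V}}) (x y : edgeset_triple V) (e : {set V}).

Lemma big_component_valid w : w \in C -> valid_vert E w.
Proof.
case: compC => u0 [u0E memC] /memC u0w; elim: u0w u0E => [u v [_ []]| // |u v z _ IHuv _ IHvz] //.
by move=> /IHuv/IHvz.
Qed.

Lemma big_component_closed u w : u \in C -> bigadj E u w -> w \in C.
Proof. by case: compC => u0 [_ memC] /memC u0u uw; apply/memC/(rt_trans _ _ _ _ _ u0u)/rt_step. Qed.

Hypothesis nspC : forall u, u \in C -> ~ special E u.

Lemma raise_spec x e : inl x \in C -> e \in x.2 -> crossing x.1.1 e ->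
  [/\ inr (raise e x) \in C, e \in (raise e x).1.1, crossing (raise e x).2 e
     & lower e (raise e x) = x].
Proof.
case: x => [[F1 F2] T] /= xC eT crF1; have xE := big_component_valid xC.
have [fF1 fF2 tT] := xE; have [sT acT _] := tT.
have /eqP/cards2P[a [b [ab eab]]] := simE (subsetP sT e eT); subst e.
have eqF : comps F1 = comps F2.
  by case: (comps F1 =P comps F2) => // neqF; case: (nspC xC).
have abE := subsetP sT _ eT.
have ncF1 := crF1; rewrite crossing2 in ncF1.
have ncF2 : ~~ connect (adj F2) a b by rewrite -(comps_connect_eq eqF).
have lowerK : lower [set a; b] (raise [set a; b] (F1, F2, T)) = (F1, F2, T).
  rewrite /lower /raise /= (setUC F1) (setUC F2) (setUC (T :\ _)) setD1K //.
  by rewrite !setU1K // disconnected_edge_notin.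
split; last exact: lowerK.
- apply: (big_component_closed xC); split; first exact: xE.
  split; last by exists [set a; b] => //; case: lowerK => -> -> ->.
  split; [exact: spanning_tree_addedge | exact: spanning_tree_addedge |].
  exact: spanning_2forest_deledge.
- by rewrite /= in_setU in_set1 eqxx orbT.
- by rewrite /= crossing2 acyclic_deledge_disconnect.
Qed.

Lemma lower_spec y e : inr y \in C -> e \in y.1.1 -> crossing y.2 e ->
  [/\ inl (lower e y) \in C, e \in (lower e y).2, crossing (lower e y).1.1 e
     & raise e (lower e y) = y].
Proof.
case: y => [[T1 T2] F] /= yC eT1 crF; have yE := big_component_valid yC.
have [tT1 tT2 fF] := yE; have [sT1 acT1 _] := tT1; have [_ acT2 _] := tT2.
have /eqP/cards2P[a [b [ab eab]]] := simE (subsetP sT1 e eT1); subst e.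
have abE := subsetP sT1 _ eT1.
have ncF := crF; rewrite crossing2 in ncF.
have eT2 : [set a; b] \in T2.
  apply: contraT => eNT2; case: (nspC yC); exists [set a; b].
    by rewrite in_setU !in_setD eT1 eNT2.
  exact: spanning_tree_addedge.
have raiseK : raise [set a; b] (lower [set a; b] (T1, T2, F)) = (T1, T2, F).
  rewrite /lower /raise /= (setUC (T1 :\ _)) (setUC (T2 :\ _)) (setUC F) !setD1K //.
  by rewrite setU1K // disconnected_edge_notin.
split; last exact: raiseK.
- apply: (big_component_closed yC); split; first exact: yE.
  split; last by exists [set a; b].
  split; [exact: spanning_2forest_deledge | exact: spanning_2forest_deledge |].
  exact: spanning_tree_addedge.
- by rewrite /= in_setU in_set1 eqxx orbT.
- by rewrite /= crossing2 acyclic_deledge_disconnect.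
Qed.

End BigComponent.

Theorem proposition3p11 (R : realFieldType) (V : finType) (E : {set {set V}})
    (p : V -> R) (C : {set bigvert V}) :
  simple_graph E -> graph_connected E ->
  (\sum_(v : V) p v = 0)%R ->
  big_component E C ->
  (forall u, u \in C -> ~ special E u) ->
  (\sum_(x : edgeset_triple V | inl x \in C) qF p x.1.1)%R =
  (\sum_(y : edgeset_triple V | inr y \in C) qF p y.2)%R.
Proof.
move=> simE conE p_sum0 compC nspC.
have [_ /imsetP[d _ _]] : exists X, X \in comps E by apply/set0Pn; rewrite -card_gt0 conE.
pose s (e : {set V}) := odflt d [pick v in e].
have s_edge e : e \in E -> s e \in e.
  by rewrite /s; case: pickP => // e0 /simE; rewrite (eq_card0 e0).
pose w G T e := (weight p (comp G (s e)) * weight p (comp (T :\ e) (s e)))%R.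
have qF_cuts G T : spanning_2forest E G -> spanning_tree E T ->
    qF p G = (\sum_(e in T | crossing G e) w G T e)%R.
  exact: qF_tree_cuts.
rewrite (eq_bigr (fun x : edgeset_triple V =>
                    \sum_(e in x.2 | crossing x.1.1 e) w x.1.1 x.2 e)%R); last first.
  by move=> [[F1 F2] T] /(big_component_valid compC) [fF1 _ tT]; apply: qF_cuts.
rewrite [RHS](eq_bigr (fun y : edgeset_triple V =>
                         \sum_(e in y.1.1 | crossing y.2 e) w y.2 y.1.1 e)%R); last first.
  by move=> [[T1 T2] F] /(big_component_valid compC) [tT1 _ fF]; apply: qF_cuts.
rewrite !pair_big_dep.
apply: (eq_big_bij _ (h := fun ye => (lower ye.2 ye.1, ye.2))
                    (h' := fun xe => (raise xe.2 xe.1, xe.2))).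
- move=> [x e] /and3P[xC eT crx].
  by case: (raise_spec simE compC nspC xC eT crx) => /= -> -> -> ->.
- move=> [y e] /and3P[yC eT cry].
  by case: (lower_spec simE compC nspC yC eT cry) => /= -> -> -> ->.
- move=> [y e] /and3P[yC eT cry].
  case: (lower_spec simE compC nspC yC eT cry) => _ _ _ /(congr1 snd) /= FeK.
  by rewrite /w FeK mulrC.
Qed.
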